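(* Fix $\gamma\neq0$. Consider the subclass of equations $i\psi_t+\psi_{xx}+|\psi|^\gamma\psi+V\psi=0$ whose potentials depend only on $t$, i.e. $V=V(t)$ is an arbitrary smooth complex-valued function of $t$. The intersection of the maximal Lie invariance algebras of all equations in this subclass is $\langle M,\ G(1),\ G(t)\rangle$. Explicitly, this is $\langle M,\ \partial_x,\ t\partial_x+\tfrac12 xM\rangle$.
   Context: $M=i(\psi\partial_\psi-\psi^*\partial_{\psi^*})$ and $G(\chi)=\chi\partial_x+\tfrac12\chi_t xM$. Lie symmetries are vector fields on the space of $(t,x,\psi,\psi^* )$, with $\psi^*$ treated as an independent variable. *)

From Stdlib Require Import Reals List.
From Coquelicot Require Import Coquelicot.
Open Scope R_scope.

(* Real form of the equation.  psi = u + i v, V = V1 + i V2 (V1, V2 : R -> R). *)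
(* Working in real coordinates (t,x,u,v) is equivalent to the (psi, psi^* )  *)
(* formalism, where the coefficient of d_{psi^*} is the conjugate of that of *)
(* d_psi.  |psi|^gamma = (u^2+v^2)^(gamma/2); the equation lives on          *)
(* Omega = { u^2 + v^2 > 0 } (needed for gamma < 0).                         *)

Definition Omega (u v : R) : Prop := 0 < u ^ 2 + v ^ 2.

Definition smooth1 (f : R -> R) : Prop := forall (n : nat) (t : R), ex_derive_n f n t.

Definition pd2 (i : nat) (f : R -> R -> R) : R -> R -> R :=
  match i with
  | O => fun t x => Derive (fun s => f s x) t
  | _ => fun t x => Derive (fun s => f t s) x
  end.
Definition ex_pd2 (i : nat) (f : R -> R -> R) (t x : R) : Prop :=
  match i with
  | O => ex_derive (fun s => f s x) t
  | _ => ex_derive (fun s => f t s) x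
  end.
Fixpoint iter_pd2 (ds : list nat) (f : R -> R -> R) : R -> R -> R :=
  match ds with nil => f | i :: ds' => pd2 i (iter_pd2 ds' f) end.
Definition smooth2 (f : R -> R -> R) : Prop :=
  forall (ds : list nat) (t x : R),
    (forall i, ex_pd2 i (iter_pd2 ds f) t x) /\
    continuous (fun p : R * R => iter_pd2 ds f (fst p) (snd p)) (t, x).

Definition fun4 := R -> R -> R -> R -> R.
Definition pd4 (i : nat) (f : fun4) : fun4 :=
  match i with
  | O => fun t x u v => Derive (fun s => f s x u v) t
  | 1%nat => fun t x u v => Derive (fun s => f t s u v) x
  | 2%nat => fun t x u v => Derive (fun s => f t x s v) u
  | _ => fun t x u v => Derive (fun s => f t x u s) v
  end.
Definition ex_pd4 (i : nat) (f : fun4) (t x u v : R) : Prop :=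
  match i with
  | O => ex_derive (fun s => f s x u v) t
  | 1%nat => ex_derive (fun s => f t s u v) x
  | 2%nat => ex_derive (fun s => f t x s v) u
  | _ => ex_derive (fun s => f t x u s) v
  end.
Fixpoint iter_pd4 (ds : list nat) (f : fun4) : fun4 :=
  match ds with nil => f | i :: ds' => pd4 i (iter_pd4 ds' f) end.
Definition smooth_on_Omega (f : fun4) : Prop :=
  forall (ds : list nat) (t x u v : R), Omega u v ->
    (forall i, ex_pd4 i (iter_pd4 ds f) t x u v) /\
    continuous (fun p : R * R * R * R =>
                  iter_pd4 ds f (fst (fst (fst p))) (snd (fst (fst p)))
                                (snd (fst p)) (snd p)) (t, x, u, v).

(* Vector fields  Q = tau d_t + xi d_x + eta d_u + theta d_v  on (t,x,u,v) *)
Record VF := mkVF { vf_tau : fun4; vf_xi : fun4; vf_eta : fun4; vf_theta : fun4 }.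

Definition smooth_VF (Q : VF) : Prop :=
  smooth_on_Omega (vf_tau Q) /\ smooth_on_Omega (vf_xi Q) /\
  smooth_on_Omega (vf_eta Q) /\ smooth_on_Omega (vf_theta Q).

(* Second-order jet coordinates (those the equations involve), indexed as    *)
(*  0:t 1:x 2:u 3:v 4:u_t 5:u_x 6:v_t 7:v_x 8:u_xx 9:v_xx                     *)
Definition Jet := nat -> R.
Definition jupd (k : nat) (j : Jet) (s : R) : Jet :=
  fun i => if Nat.eqb i k then s else j i.
Definition pdJ (k : nat) (E : Jet -> R) (j : Jet) : R :=
  Derive (fun s => E (jupd k j s)) (j k).

(* The equation  i psi_t + psi_xx + |psi|^gamma psi + V(t) psi = 0  in real form:
   real part E1, imaginary part E2. *)
Definition absg (gamma : R) (j : Jet) : R := Rpower (j 2%nat ^ 2 + j 3%nat ^ 2) (gamma / 2).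
Definition NLS_E1 (gamma : R) (V1 V2 : R -> R) (j : Jet) : R :=
  - j 6%nat + j 8%nat + (absg gamma j + V1 (j O)) * j 2%nat - V2 (j O) * j 3%nat.
Definition NLS_E2 (gamma : R) (V1 V2 : R -> R) (j : Jet) : R :=
  j 4%nat + j 9%nat + (absg gamma j + V1 (j O)) * j 3%nat + V2 (j O) * j 2%nat.

Definition d_t (g : R -> R -> R) (t x : R) : R := Derive (fun s => g s x) t.
Definition d_x (g : R -> R -> R) (t x : R) : R := Derive (fun y => g t y) x.

Definition along (f : fun4) (U W : R -> R -> R) : R -> R -> R :=
  fun t x => f t x (U t x) (W t x).

Definition jet2 (U W : R -> R -> R) (t x : R) : Jet :=
  fun i => match i with
  | O => t | 1%nat => x | 2%nat => U t x | 3%nat => W t x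
  | 4%nat => d_t U t x | 5%nat => d_x U t x
  | 6%nat => d_t W t x | 7%nat => d_x W t x
  | 8%nat => d_x (d_x U) t x | _ => d_x (d_x W) t x
  end.

(* Prolongation coefficients (Olver's formula) evaluated along the section:
   total derivatives along the section are ordinary partial derivatives of
   the composed functions.  Z is the dependent variable (U or W) whose
   coefficient is eta_Z. *)
Section Prol.
Variables (Q : VF) (U W : R -> R -> R).
Definition tauS := along (vf_tau Q) U W.
Definition xiS := along (vf_xi Q) U W.
Definition prol_t (etaZ : fun4) (Z : R -> R -> R) : R -> R -> R := fun t x =>
  d_t (along etaZ U W) t x - d_t Z t x * d_t tauS t x - d_x Z t x * d_t xiS t x.
Definition prol_x (etaZ : fun4) (Z : R -> R -> R) : R -> R -> R := fun t x =>
  d_x (along etaZ U W) t x - d_t Z t x * d_x tauS t x - d_x Z t x * d_x xiS t x.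
Definition prol_xx (etaZ : fun4) (Z : R -> R -> R) : R -> R -> R := fun t x =>
  d_x (prol_x etaZ Z) t x - d_x (d_t Z) t x * d_x tauS t x
  - d_x (d_x Z) t x * d_x xiS t x.
Definition prol2 (k : nat) (t x : R) : R :=
  match k with
  | O => tauS t x
  | 1%nat => xiS t x
  | 2%nat => along (vf_eta Q) U W t x
  | 3%nat => along (vf_theta Q) U W t x
  | 4%nat => prol_t (vf_eta Q) U t x
  | 5%nat => prol_x (vf_eta Q) U t x
  | 6%nat => prol_t (vf_theta Q) W t x
  | 7%nat => prol_x (vf_theta Q) W t x
  | 8%nat => prol_xx (vf_eta Q) U t x
  | _ => prol_xx (vf_theta Q) W t x
  end.
Definition prol2_apply (E : Jet -> R) (t x : R) : R :=
  sum_f_R0 (fun k => prol2 k t x * pdJ k E (jet2 U W t x)) 9.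
End Prol.

(* Infinitesimal invariance criterion: Q^(2) E = 0 on the solution manifold
   E1 = E2 = 0 of the 2-jet space (every 2-jet point over Omega is the 2-jet
   of some smooth section at some point). *)
Definition in_max_Lie_alg (gamma : R) (V1 V2 : R -> R) (Q : VF) : Prop :=
  smooth_VF Q /\
  forall (U W : R -> R -> R) (t x : R),
    smooth2 U -> smooth2 W -> Omega (U t x) (W t x) ->
    NLS_E1 gamma V1 V2 (jet2 U W t x) = 0 ->
    NLS_E2 gamma V1 V2 (jet2 U W t x) = 0 ->
    prol2_apply Q U W (NLS_E1 gamma V1 V2) t x = 0 /\
    prol2_apply Q U W (NLS_E2 gamma V1 V2) t x = 0.

(* M = i(psi d_psi - psi^* d_psi^* ) = -v d_u + u d_v *)
Definition vfM : VF :=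
  mkVF (fun _ _ _ _ => 0) (fun _ _ _ _ => 0) (fun _ _ _ v => - v) (fun _ _ u _ => u).
(* G(chi) = chi d_x + 1/2 chi_t x M *)
Definition vfG (chi : R -> R) : VF :=
  mkVF (fun _ _ _ _ => 0) (fun t _ _ _ => chi t)
       (fun t x _ v => / 2 * Derive chi t * x * (- v))
       (fun t x u _ => / 2 * Derive chi t * x * u).

Definition vf_comb (c1 c2 c3 : R) (A B C : VF) : VF :=
  mkVF (fun t x u v => c1 * vf_tau A t x u v + c2 * vf_tau B t x u v + c3 * vf_tau C t x u v)
       (fun t x u v => c1 * vf_xi A t x u v + c2 * vf_xi B t x u v + c3 * vf_xi C t x u v)
       (fun t x u v => c1 * vf_eta A t x u v + c2 * vf_eta B t x u v + c3 * vf_eta C t x u v)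
       (fun t x u v => c1 * vf_theta A t x u v + c2 * vf_theta B t x u v + c3 * vf_theta C t x u v).

Definition vf_eq_on_Omega (P Q : VF) : Prop :=
  forall t x u v, Omega u v ->
    vf_tau P t x u v = vf_tau Q t x u v /\ vf_xi P t x u v = vf_xi Q t x u v /\
    vf_eta P t x u v = vf_eta Q t x u v /\ vf_theta P t x u v = vf_theta Q t x u v.

(* Sufficiency: for Q = c1 M + c2 G(1) + c3 G(t), with mu = c1 + c3 x / 2, the prolonged
   equations are -mu E2 and mu E1, so Q is a symmetry whatever V(t) is.

   Necessity: the invariance criterion is evaluated on quadratic sections realizing an
   arbitrary 2-jet and on affine potentials V(t). The slope of V enters only through
   tau V'(t), so tau = 0. Varying the jet splits the rest into determining equations: xi
   depends on t only, eta and theta satisfy Cauchy-Riemann relations and Euler's identity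
   (hence are 1-homogeneous in (u, v)), and two zeroth-order equations remain. Comparing these
   at (u, v) and (2u, 2v), where |psi|^gamma gains the factor 4^(gamma/2) <> 1, gives eta_u = 0.
   Then theta = m u and eta = - m v, and the remaining equations force m_t = m_xx = 0 and
   xi_t = 2 m_x, i.e. Q = c1 M + c2 G(1) + c3 G(t). *)

From Stdlib Require Import Reals Lra List FunctionalExtensionality.
From Coquelicot Require Import Coquelicot.
Open Scope R_scope.


Definition R4 := (R * R * R * R)%type.

Lemma Omega_near (u v : R) : Omega u v ->
  exists e, 0 < e /\ forall u' v', Rabs (u' - u) < e -> Rabs (v' - v) < e -> Omega u' v'.
Proof.
  unfold Omega; intros H.
  destruct (Req_dec u 0) as [Hu|Hu].
  - subst. assert (Hv : v <> 0) by (intro; subst; lra).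
    exists (Rabs v). split; [apply Rabs_pos_lt; auto|].
    intros u' v' _ H2. assert (v' <> 0).
    { intro; subst. rewrite Rminus_0_l, Rabs_Ropp in H2. lra. }
    assert (0 < v' ^ 2) by (apply pow2_gt_0; auto). nra.
  - exists (Rabs u). split; [apply Rabs_pos_lt; auto|].
    intros u' v' H2 _. assert (u' <> 0).
    { intro; subst. rewrite Rminus_0_l, Rabs_Ropp in H2. lra. }
    assert (0 < u' ^ 2) by (apply pow2_gt_0; auto). nra.
Qed.

Lemma locally_Omega4 (t x u v : R) : Omega u v ->
  locally (t, x, u, v) (fun p : R4 => Omega (snd (fst p)) (snd p)).
Proof.
  intros HO. destruct (Omega_near u v HO) as [e [He HN]].
  exists (mkposreal e He). intros [[[p0 p1] p2] p3] [[[_ _] H2] H3]. exact (HN _ _ H2 H3).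
Qed.

Lemma locally_Omega_comp (cu cv : R -> R) (s0 : R) :
  continuous cu s0 -> continuous cv s0 -> Omega (cu s0) (cv s0) ->
  locally s0 (fun s => Omega (cu s) (cv s)).
Proof.
  intros Hu Hv HO. destruct (Omega_near _ _ HO) as [e [He HN]].
  apply (filter_imp (fun s => ball (cu s0) e (cu s) /\ ball (cv s0) e (cv s))).
  - intros s [H1 H2]. exact (HN _ _ H1 H2).
  - apply filter_and.
    + exact (Hu _ (locally_ball (cu s0) (mkposreal e He))).
    + exact (Hv _ (locally_ball (cv s0) (mkposreal e He))).
Qed.

Lemma locally_Omega_u (u v : R) : Omega u v -> locally u (fun s => Omega s v).
Proof.
  apply (locally_Omega_comp (fun s => s) (fun _ => v));
    [apply continuous_id | apply continuous_const].
Qed.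

Lemma locally_Omega_v (u v : R) : Omega u v -> locally v (fun s => Omega u s).
Proof.
  apply (locally_Omega_comp (fun _ => u) (fun s => s));
    [apply continuous_const | apply continuous_id].
Qed.

Lemma Omega_scale (u v k : R) : Omega u v -> 0 < k -> Omega (k * u) (k * v).
Proof.
  unfold Omega. intros HO Hk.
  replace ((k * u) ^ 2 + (k * v) ^ 2) with (k ^ 2 * (u ^ 2 + v ^ 2)) by ring.
  apply Rmult_lt_0_compat; [apply pow_lt|]; assumption.
Qed.

Lemma Omega_with_1 (z : R) : Omega z 1 /\ Omega 1 z.
Proof. unfold Omega. split; nra. Qed.

Lemma Omega_of_neq0 (u v : R) : u <> 0 \/ v <> 0 -> Omega u v.
Proof.
  unfold Omega. intros [H|H]; [pose proof (pow2_gt_0 u H) | pose proof (pow2_gt_0 v H)];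
    pose proof (pow2_ge_0 u); pose proof (pow2_ge_0 v); lra.
Qed.

Lemma Omega_mult_eq0 (T u v : R) : Omega u v -> T * u = 0 -> T * v = 0 -> T = 0.
Proof.
  unfold Omega. intros HO Hu Hv.
  assert (H : T * T * (u ^ 2 + v ^ 2) = 0)
    by (replace (T * T * (u ^ 2 + v ^ 2)) with ((T * u) ^ 2 + (T * v) ^ 2) by ring;
        rewrite Hu, Hv; ring).
  apply Rmult_integral in H as [H|H]; [|lra].
  now apply Rmult_integral in H as [H|H].
Qed.

Lemma is_derive_eq (f : R -> R) (x l l' : R) : is_derive f x l -> l = l' -> is_derive f x l'.
Proof. now intros H <-. Qed.

Lemma is_derive_Rplus (f g : R -> R) (x df dg : R) :
  is_derive f x df -> is_derive g x dg -> is_derive (fun y => f y + g y) x (df + dg).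
Proof. apply (is_derive_plus (V := R_NormedModule)). Qed.

Lemma is_derive_Rminus (f g : R -> R) (x df dg : R) :
  is_derive f x df -> is_derive g x dg -> is_derive (fun y => f y - g y) x (df - dg).
Proof. apply (is_derive_minus (V := R_NormedModule)). Qed.

Lemma is_derive_Rmult (f g : R -> R) (x df dg : R) :
  is_derive f x df -> is_derive g x dg -> is_derive (fun y => f y * g y) x (df * g x + f x * dg).
Proof. intros Hf Hg. apply (is_derive_mult f g); [exact Hf | exact Hg | apply Rmult_comm]. Qed.

Lemma continuous_Rplus {U : UniformSpace} (f g : U -> R) (x : U) :
  continuous f x -> continuous g x -> continuous (fun y => f y + g y) x.
Proof. apply (continuous_plus (V := R_NormedModule)). Qed.

Lemma continuous_Rminus {U : UniformSpace} (f g : U -> R) (x : U) :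
  continuous f x -> continuous g x -> continuous (fun y => f y - g y) x.
Proof. apply (continuous_minus (V := R_NormedModule)). Qed.

Lemma continuous_Rmult {U : UniformSpace} (f g : U -> R) (x : U) :
  continuous f x -> continuous g x -> continuous (fun y => f y * g y) x.
Proof. apply (continuous_mult (K := R_AbsRing)). Qed.

Ltac solve_continuous :=
  repeat match goal with
  | |- continuous (fun _ => ?c) _ => apply continuous_const
  | |- continuous (fun p => @?f p + @?g p) _ => apply (continuous_Rplus f g)
  | |- continuous (fun p => @?f p - @?g p) _ => apply (continuous_Rminus f g)
  | |- continuous (fun p => @?f p * @?g p) _ => apply (continuous_Rmult f g)
  | |- continuous (fun p => fst (@?f p)) _ => apply (continuous_comp f fst)
  | |- continuous (fun p => snd (@?f p)) _ => apply (continuous_comp f snd)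
  | |- continuous (fun p => p) _ => apply continuous_id
  | |- continuous fst _ => apply continuous_fst
  | |- continuous snd _ => apply continuous_snd
  end.

Lemma is_derive_zero_const (F : R -> R) (a b : R) :
  (forall z, Rmin a b <= z <= Rmax a b -> is_derive F z 0) -> F a = F b.
Proof.
  intros H. destruct (Rtotal_order a b) as [Hab|[->|Hab]]; [| reflexivity |].
  - apply (eq_is_derive (V := R_NormedModule)); [|exact Hab].
    intros z Hz. apply H. rewrite Rmin_left, Rmax_right by lra. exact Hz.
  - symmetry. apply (eq_is_derive (V := R_NormedModule)); [|exact Hab].
    intros z Hz. apply H. rewrite Rmin_right, Rmax_left by lra. exact Hz.
Qed.

Lemma Derive_zero_const (F : R -> R) (a b : R) :
  (forall z, ex_derive F z) -> (forall z, Derive F z = 0) -> F a = F b.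
Proof.
  intros Hex H0. apply is_derive_zero_const. intros z _.
  rewrite <- (H0 z). apply Derive_correct, Hex.
Qed.

Lemma Rpower_pred (x y : R) : 0 < x -> Rpower x y = Rpower x (y - 1) * x.
Proof.
  intros Hx. rewrite <- (Rpower_1 x Hx) at 3. rewrite <- Rpower_plus. f_equal. ring.
Qed.

Lemma Rpower4_neq1 (gamma : R) : gamma <> 0 -> Rpower 4 (gamma / 2) <> 1.
Proof.
  intros Hg E. unfold Rpower in E. rewrite <- exp_0 in E. apply exp_inv in E.
  assert (0 < ln 4) by (rewrite <- ln_1; apply ln_increasing; lra).
  apply Rmult_integral in E as [E|E]; lra.
Qed.

Lemma mvt_increment_bound (phi : R -> R) (a b g e : R) :
  (forall z, Rabs (z - a) <= Rabs (b - a) -> ex_derive phi z /\ Rabs (Derive phi z - g) <= e) ->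
  Rabs (phi b - phi a - g * (b - a)) <= e * Rabs (b - a).
Proof.
  intros H.
  destruct (MVT_cor4 phi (Derive phi) a (Rabs (b - a))) with (b := b) as [z [Ez Hz]].
  - intros z Hz. apply Derive_correct, H, Hz.
  - apply Rle_refl.
  - rewrite Ez, <- Rmult_minus_distr_r, Rabs_mult.
    apply Rmult_le_compat_r; [apply Rabs_pos | apply H, Hz].
Qed.

Lemma is_derive_near (c : R -> R) (s0 d e : R) : is_derive c s0 d -> 0 < e ->
  locally 0 (fun h => Rabs (c (s0 + h) - c s0) < e /\
                      (h <> 0 -> Rabs ((c (s0 + h) - c s0) / h - d) < e)).
Proof.
  intros D He. apply filter_and.
  - assert (Hc : continuous (fun h => c (s0 + h)) 0).
    { apply continuous_comp.
      - apply (continuous_Rplus (fun _ => s0) (fun h => h));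
          [apply continuous_const | apply continuous_id].
      - rewrite Rplus_0_r. apply (ex_derive_continuous (V := R_NormedModule)). exists d. exact D. }
    apply (filter_imp (fun h => ball (c (s0 + 0)) e (c (s0 + h)))).
    + intros h Hh. rewrite Rplus_0_r in Hh. exact Hh.
    + exact (Hc _ (locally_ball _ (mkposreal e He))).
  - apply is_derive_Reals in D. destruct (D e He) as [delta Hdelta].
    exists delta. intros h Hh Hh0. apply Hdelta; [exact Hh0|].
    change (Rabs (h - 0) < delta) in Hh. rewrite Rminus_0_r in Hh. exact Hh.
Qed.

Lemma quotient_error_bound (h X g0 g1 g2 g3 D0 D1 D2 D3 d0 d1 d2 d3 e : R) :
  h <> 0 -> e <= 1 ->
  Rabs (X - (g0 * D0 + g1 * D1 + g2 * D2 + g3 * D3))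
    <= e * (Rabs D0 + Rabs D1 + Rabs D2 + Rabs D3) ->
  Rabs (D0 / h - d0) < e -> Rabs (D1 / h - d1) < e ->
  Rabs (D2 / h - d2) < e -> Rabs (D3 / h - d3) < e ->
  Rabs (X / h - (g0 * d0 + g1 * d1 + g2 * d2 + g3 * d3))
    <= e * (Rabs g0 + Rabs g1 + Rabs g2 + Rabs g3 + Rabs d0 + Rabs d1 + Rabs d2 + Rabs d3 + 4).
Proof.
  intros Hh He1 HX Q0 Q1 Q2 Q3.
  assert (He : 0 <= e) by (eapply Rle_trans; [apply Rabs_pos | apply Rlt_le, Q0]).
  assert (Hih : 0 < / Rabs h) by (apply Rinv_0_lt_compat, Rabs_pos_lt, Hh).
  assert (Hq : forall D d, Rabs (D / h - d) < e -> e * (Rabs D * / Rabs h) <= e * (Rabs d + 1)).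
  { intros D d HD. apply Rmult_le_compat_l; [exact He|].
    rewrite <- Rabs_inv, <- Rabs_mult. pose proof (Rabs_triang_inv (D / h) d). lra. }
  assert (Hg : forall g D d, Rabs (D / h - d) < e -> Rabs (g * (D / h - d)) <= Rabs g * e).
  { intros g D d HD. rewrite Rabs_mult. apply Rmult_le_compat_l; [apply Rabs_pos | lra]. }
  replace (X / h - (g0 * d0 + g1 * d1 + g2 * d2 + g3 * d3))
    with ((X - (g0 * D0 + g1 * D1 + g2 * D2 + g3 * D3)) * / h
          + (g0 * (D0 / h - d0) + g1 * (D1 / h - d1) + g2 * (D2 / h - d2) + g3 * (D3 / h - d3)))
    by (field; exact Hh).
  apply Rmult_le_compat_r with (r := / Rabs h) in HX; [|lra].
  rewrite <- Rabs_inv, <- Rabs_mult in HX.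
  pose proof (Rabs_triang (g0 * (D0 / h - d0) + g1 * (D1 / h - d1) + g2 * (D2 / h - d2))
                          (g3 * (D3 / h - d3))).
  pose proof (Rabs_triang (g0 * (D0 / h - d0) + g1 * (D1 / h - d1)) (g2 * (D2 / h - d2))).
  pose proof (Rabs_triang (g0 * (D0 / h - d0)) (g1 * (D1 / h - d1))).
  pose proof (Rabs_triang ((X - (g0 * D0 + g1 * D1 + g2 * D2 + g3 * D3)) * / h)
                (g0 * (D0 / h - d0) + g1 * (D1 / h - d1) + g2 * (D2 / h - d2)
                 + g3 * (D3 / h - d3))).
  pose proof (Hq _ _ Q0). pose proof (Hq _ _ Q1). pose proof (Hq _ _ Q2). pose proof (Hq _ _ Q3).
  pose proof (Hg g0 _ _ Q0). pose proof (Hg g1 _ _ Q1). pose proof (Hg g2 _ _ Q2).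
  pose proof (Hg g3 _ _ Q3). rewrite Rabs_inv in *. nra.
Qed.

Lemma iter_pd4_app (ds : list nat) (i : nat) (f : fun4) :
  iter_pd4 ds (pd4 i f) = iter_pd4 (ds ++ i :: nil) f.
Proof. induction ds as [|j ds IH]; simpl; [reflexivity | now rewrite IH]. Qed.

Lemma smooth_on_Omega_pd4 (f : fun4) (i : nat) :
  smooth_on_Omega f -> smooth_on_Omega (pd4 i f).
Proof. intros H ds t x u v HO. rewrite iter_pd4_app. now apply H. Qed.

Lemma smooth_on_Omega_ex_pd4 (f : fun4) (i : nat) (t x u v : R) :
  smooth_on_Omega f -> Omega u v -> ex_pd4 i f t x u v.
Proof. intros H HO. apply (H nil t x u v HO). Qed.

Lemma smooth_on_Omega_continuous (f : fun4) (t x u v : R) :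
  smooth_on_Omega f -> Omega u v ->
  continuous (fun p : R4 => f (fst (fst (fst p))) (snd (fst (fst p))) (snd (fst p)) (snd p))
             (t, x, u, v).
Proof. intros H HO. apply (H nil t x u v HO). Qed.

Lemma partials_near (f : fun4) (a0 a1 a2 a3 e : R) :
  smooth_on_Omega f -> Omega a2 a3 -> 0 < e ->
  exists r, 0 < r /\ forall i p0 p1 p2 p3,
    Rabs (p0 - a0) < r -> Rabs (p1 - a1) < r -> Rabs (p2 - a2) < r -> Rabs (p3 - a3) < r ->
    ex_pd4 i f p0 p1 p2 p3 /\ Rabs (pd4 i f p0 p1 p2 p3 - pd4 i f a0 a1 a2 a3) <= e.
Proof.
  intros Hf HO He.
  set (close i (p : R4) :=
    Rabs (pd4 i f (fst (fst (fst p))) (snd (fst (fst p))) (snd (fst p)) (snd p)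
          - pd4 i f a0 a1 a2 a3) < e).
  assert (Hclose : forall i, locally (a0, a1, a2, a3) (close i)).
  { intros i.
    exact (smooth_on_Omega_continuous _ _ _ _ _ (smooth_on_Omega_pd4 f i Hf) HO _
             (locally_ball _ (mkposreal e He))). }
  destruct (filter_and _ _ (locally_Omega4 a0 a1 a2 a3 HO)
              (filter_and _ _ (filter_and _ _ (Hclose 0%nat) (Hclose 1%nat))
                              (filter_and _ _ (Hclose 2%nat) (Hclose 3%nat))))
    as [r Hr].
  exists r. split; [apply cond_pos|].
  intros i p0 p1 p2 p3 H0 H1 H2 H3.
  destruct (Hr (p0, p1, p2, p3) (conj (conj (conj H0 H1) H2) H3))
    as [HOp [[C0 C1] [C2 C3]]].
  split; [now apply smooth_on_Omega_ex_pd4|].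
  apply Rlt_le. destruct i as [|[|[|i]]]; assumption.
Qed.

Lemma increment_first_order (f : fun4) (a0 a1 a2 a3 b0 b1 b2 b3 r e : R) :
  (forall i p0 p1 p2 p3,
     Rabs (p0 - a0) < r -> Rabs (p1 - a1) < r -> Rabs (p2 - a2) < r -> Rabs (p3 - a3) < r ->
     ex_pd4 i f p0 p1 p2 p3 /\ Rabs (pd4 i f p0 p1 p2 p3 - pd4 i f a0 a1 a2 a3) <= e) ->
  Rabs (b0 - a0) < r -> Rabs (b1 - a1) < r -> Rabs (b2 - a2) < r -> Rabs (b3 - a3) < r ->
  Rabs (f b0 b1 b2 b3 - f a0 a1 a2 a3
        - (pd4 0 f a0 a1 a2 a3 * (b0 - a0) + pd4 1 f a0 a1 a2 a3 * (b1 - a1)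
           + pd4 2 f a0 a1 a2 a3 * (b2 - a2) + pd4 3 f a0 a1 a2 a3 * (b3 - a3)))
  <= e * (Rabs (b0 - a0) + Rabs (b1 - a1) + Rabs (b2 - a2) + Rabs (b3 - a3)).
Proof.
  intros Hbox H0 H1 H2 H3.
  assert (Z : forall a, Rabs (a - a) < r)
    by (intros a; rewrite Rminus_diag, Rabs_R0; eapply Rle_lt_trans; [apply Rabs_pos | exact H0]).
  (* Telescope from b to a, one coordinate at a time. *)
  pose proof (mvt_increment_bound (fun z => f z b1 b2 b3) a0 b0 (pd4 0 f a0 a1 a2 a3) e
                (fun z Hz => Hbox 0%nat z b1 b2 b3 (Rle_lt_trans _ _ _ Hz H0) H1 H2 H3)) as E0.
  pose proof (mvt_increment_bound (fun z => f a0 z b2 b3) a1 b1 (pd4 1 f a0 a1 a2 a3) e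
                (fun z Hz => Hbox 1%nat a0 z b2 b3 (Z a0) (Rle_lt_trans _ _ _ Hz H1) H2 H3)) as E1.
  pose proof (mvt_increment_bound (fun z => f a0 a1 z b3) a2 b2 (pd4 2 f a0 a1 a2 a3) e
                (fun z Hz => Hbox 2%nat a0 a1 z b3 (Z a0) (Z a1)
                               (Rle_lt_trans _ _ _ Hz H2) H3)) as E2.
  pose proof (mvt_increment_bound (fun z => f a0 a1 a2 z) a3 b3 (pd4 3 f a0 a1 a2 a3) e
                (fun z Hz => Hbox 3%nat a0 a1 a2 z (Z a0) (Z a1) (Z a2)
                               (Rle_lt_trans _ _ _ Hz H3))) as E3.
  cbv beta in E0, E1, E2, E3. apply Rabs_le_between in E0, E1, E2, E3.
  apply Rabs_le_between. rewrite !Rmult_plus_distr_l. lra.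
Qed.

Lemma is_derive_comp4 (f : fun4) (c0 c1 c2 c3 : R -> R) (s0 d0 d1 d2 d3 : R) :
  smooth_on_Omega f -> Omega (c2 s0) (c3 s0) ->
  is_derive c0 s0 d0 -> is_derive c1 s0 d1 -> is_derive c2 s0 d2 -> is_derive c3 s0 d3 ->
  is_derive (fun s => f (c0 s) (c1 s) (c2 s) (c3 s)) s0
    (pd4 0 f (c0 s0) (c1 s0) (c2 s0) (c3 s0) * d0 + pd4 1 f (c0 s0) (c1 s0) (c2 s0) (c3 s0) * d1
     + pd4 2 f (c0 s0) (c1 s0) (c2 s0) (c3 s0) * d2 + pd4 3 f (c0 s0) (c1 s0) (c2 s0) (c3 s0) * d3).
Proof.
  intros Hf HO D0 D1 D2 D3.
  set (a0 := c0 s0) in *. set (a1 := c1 s0) in *. set (a2 := c2 s0) in *. set (a3 := c3 s0) in *.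
  set (g0 := pd4 0 f a0 a1 a2 a3). set (g1 := pd4 1 f a0 a1 a2 a3).
  set (g2 := pd4 2 f a0 a1 a2 a3). set (g3 := pd4 3 f a0 a1 a2 a3).
  apply is_derive_Reals. intros eps Heps.
  set (K := Rabs g0 + Rabs g1 + Rabs g2 + Rabs g3 + Rabs d0 + Rabs d1 + Rabs d2 + Rabs d3 + 4).
  assert (HK : 0 < K) by (unfold K; generalize (Rabs_pos g0) (Rabs_pos g1) (Rabs_pos g2)
    (Rabs_pos g3) (Rabs_pos d0) (Rabs_pos d1) (Rabs_pos d2) (Rabs_pos d3); lra).
  set (e := Rmin 1 (eps / (2 * K))).
  assert (He : 0 < e) by (apply Rmin_pos; [lra | apply Rdiv_lt_0_compat; lra]).
  assert (HeK : e * K <= eps / 2).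
  { apply Rle_trans with (eps / (2 * K) * K); [apply Rmult_le_compat_r, Rmin_r; lra|].
    right. field. lra. }
  destruct (partials_near f a0 a1 a2 a3 e Hf HO He) as [r [Hr Hbox]].
  assert (Hm : 0 < Rmin r e) by (apply Rmin_pos; assumption).
  destruct (filter_and _ _
              (filter_and _ _ (is_derive_near c0 s0 d0 _ D0 Hm) (is_derive_near c1 s0 d1 _ D1 Hm))
              (filter_and _ _ (is_derive_near c2 s0 d2 _ D2 Hm) (is_derive_near c3 s0 d3 _ D3 Hm)))
    as [delta Hdelta].
  exists delta. intros h Hh0 Hh.
  assert (Hball : ball 0 delta h) by (change (Rabs (h - 0) < delta); now rewrite Rminus_0_r).
  destruct (Hdelta h Hball) as [[[B0 Q0] [B1 Q1]] [[B2 Q2] [B3 Q3]]].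
  specialize (Q0 Hh0). specialize (Q1 Hh0). specialize (Q2 Hh0). specialize (Q3 Hh0).
  pose proof (Rmin_l r e) as Hmr. pose proof (Rmin_r r e) as Hme.
  pose proof (increment_first_order f a0 a1 a2 a3 (c0 (s0 + h)) (c1 (s0 + h)) (c2 (s0 + h))
                (c3 (s0 + h)) r e Hbox (Rlt_le_trans _ _ _ B0 Hmr) (Rlt_le_trans _ _ _ B1 Hmr)
                (Rlt_le_trans _ _ _ B2 Hmr) (Rlt_le_trans _ _ _ B3 Hmr)) as Hinc.
  apply (Rle_lt_trans _ (e * K)); [|lra].
  eapply (quotient_error_bound h); [exact Hh0 | apply Rmin_l | exact Hinc | ..];
    eapply Rlt_le_trans; eassumption.
Qed.

Section ExtensionFromOmega.
Variables (F G : fun4).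
Hypothesis HFG : forall t x u v, Omega u v -> F t x u v = G t x u v.

Lemma pd4_ext_Omega (i : nat) (t x u v : R) :
  Omega u v -> pd4 i F t x u v = pd4 i G t x u v.
Proof.
  intros HO. destruct i as [|[|[|i]]]; simpl; apply Derive_ext_loc.
  1, 2: apply filter_forall; intros; now apply HFG.
  - exact (filter_imp _ _ (fun s Hs => HFG t x s v Hs) (locally_Omega_u u v HO)).
  - exact (filter_imp _ _ (fun s Hs => HFG t x u s Hs) (locally_Omega_v u v HO)).
Qed.

Lemma ex_pd4_ext_Omega (i : nat) (t x u v : R) :
  Omega u v -> ex_pd4 i F t x u v -> ex_pd4 i G t x u v.
Proof.
  intros HO. destruct i as [|[|[|i]]]; simpl; apply ex_derive_ext_loc.
  1, 2: apply filter_forall; intros; now apply HFG.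
  - exact (filter_imp _ _ (fun s Hs => HFG t x s v Hs) (locally_Omega_u u v HO)).
  - exact (filter_imp _ _ (fun s Hs => HFG t x u s Hs) (locally_Omega_v u v HO)).
Qed.

End ExtensionFromOmega.

Lemma iter_pd4_ext_Omega (F G : fun4) (ds : list nat) :
  (forall t x u v, Omega u v -> F t x u v = G t x u v) ->
  forall t x u v, Omega u v -> iter_pd4 ds F t x u v = iter_pd4 ds G t x u v.
Proof.
  intros HFG. induction ds as [|i ds IH]; simpl; [exact HFG|].
  intros t x u v. now apply pd4_ext_Omega.
Qed.

Lemma smooth_on_Omega_ext (F G : fun4) :
  (forall t x u v, Omega u v -> F t x u v = G t x u v) ->
  smooth_on_Omega F -> smooth_on_Omega G.
Proof.
  intros HFG HF ds t x u v HO.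
  pose proof (iter_pd4_ext_Omega F G ds HFG) as Hds.
  destruct (HF ds t x u v HO) as [Hex Hc]. split.
  - intros i. exact (ex_pd4_ext_Omega _ _ Hds i t x u v HO (Hex i)).
  - apply (continuous_ext_loc _ _ _ (filter_imp _ _ (fun p Hp => Hds _ _ _ _ Hp)
                                       (locally_Omega4 t x u v HO)) Hc).
Qed.

Definition poly4 (k0 k1 k2 k3 k4 k5 k6 : R) : fun4 :=
  fun t x u v => k0 + k1 * t + k2 * x + k3 * u + k4 * v + k5 * x * u + k6 * x * v.

Ltac pd4_poly4_compute :=
  repeat (apply functional_extensionality; intro); simpl;
  apply is_derive_unique; unfold poly4; auto_derive; auto; ring.

Lemma pd4_poly4_t k0 k1 k2 k3 k4 k5 k6 :
  pd4 0 (poly4 k0 k1 k2 k3 k4 k5 k6) = poly4 k1 0 0 0 0 0 0.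
Proof. pd4_poly4_compute. Qed.

Lemma pd4_poly4_x k0 k1 k2 k3 k4 k5 k6 :
  pd4 1 (poly4 k0 k1 k2 k3 k4 k5 k6) = poly4 k2 0 0 k5 k6 0 0.
Proof. pd4_poly4_compute. Qed.

Lemma pd4_poly4_u k0 k1 k2 k3 k4 k5 k6 :
  pd4 2 (poly4 k0 k1 k2 k3 k4 k5 k6) = poly4 k3 0 k5 0 0 0 0.
Proof. pd4_poly4_compute. Qed.

Lemma pd4_poly4_v (i : nat) k0 k1 k2 k3 k4 k5 k6 :
  pd4 (S (S (S i))) (poly4 k0 k1 k2 k3 k4 k5 k6) = poly4 k4 0 k6 0 0 0 0.
Proof. pd4_poly4_compute. Qed.

Lemma iter_pd4_poly4 (ds : list nat) k0 k1 k2 k3 k4 k5 k6 :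
  exists a0 a1 a2 a3 a4 a5 a6,
    iter_pd4 ds (poly4 k0 k1 k2 k3 k4 k5 k6) = poly4 a0 a1 a2 a3 a4 a5 a6.
Proof.
  induction ds as [|i ds [a0 [a1 [a2 [a3 [a4 [a5 [a6 IH]]]]]]]]; simpl.
  - now exists k0, k1, k2, k3, k4, k5, k6.
  - rewrite IH. destruct i as [|[|[|i]]];
      [rewrite pd4_poly4_t | rewrite pd4_poly4_x | rewrite pd4_poly4_u | rewrite pd4_poly4_v];
      eauto 10.
Qed.

Lemma smooth_on_Omega_poly4 k0 k1 k2 k3 k4 k5 k6 :
  smooth_on_Omega (poly4 k0 k1 k2 k3 k4 k5 k6).
Proof.
  intros ds t x u v _.
  destruct (iter_pd4_poly4 ds k0 k1 k2 k3 k4 k5 k6) as [a0 [a1 [a2 [a3 [a4 [a5 [a6 ->]]]]]]].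
  split.
  - intros [|[|[|i]]]; simpl; unfold poly4; auto_derive; auto.
  - unfold poly4. solve_continuous.
Qed.

(* Euler's identity makes [z |-> f t x (z u) (z v) / z] constant on z > 0. *)
Lemma homogeneous_of_euler (f : fun4) : smooth_on_Omega f ->
  (forall t x u v, Omega u v -> f t x u v = u * pd4 2 f t x u v + v * pd4 3 f t x u v) ->
  forall t x u v k, Omega u v -> 0 < k -> f t x (k * u) (k * v) = k * f t x u v.
Proof.
  intros Hf Heuler t x u v k HO Hk.
  set (g z := f t x (z * u) (z * v) * / z).
  assert (Dg : forall z, 0 < z -> is_derive g z 0).
  { intros z Hz. unfold g. eapply is_derive_eq.
    - apply is_derive_Rmult.
      + apply (is_derive_comp4 f (fun _ => t) (fun _ => x) (fun z => z * u) (fun z => z * v)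
                                z 0 0 u v);
          [exact Hf | exact (Omega_scale u v z HO Hz) | auto_derive; auto; ring ..].
      + auto_derive; [lra | reflexivity].
    - cbv beta. rewrite (Heuler t x (z * u) (z * v) (Omega_scale u v z HO Hz)). field. lra. }
  assert (E : g 1 = g k).
  { apply is_derive_zero_const. intros z Hz. apply Dg.
    unfold Rmin, Rmax in Hz. destruct Rle_dec in Hz; lra. }
  unfold g in E. rewrite !Rmult_1_l, Rinv_1, Rmult_1_r in E.
  rewrite E. field. lra.
Qed.

Section Homogeneous.
Variable f : fun4.
Hypothesis Hf : smooth_on_Omega f.
Hypothesis Hhom : forall t x u v k, Omega u v -> 0 < k -> f t x (k * u) (k * v) = k * f t x u v.

Lemma pd4_t_homogeneous (t x u v k : R) : Omega u v -> 0 < k ->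
  pd4 0 f t x (k * u) (k * v) = k * pd4 0 f t x u v.
Proof.
  intros HO Hk. simpl. rewrite (Derive_ext _ (fun s => k * f s x u v)); [apply Derive_scal|].
  intros s. now apply Hhom.
Qed.

Lemma pd4_x_homogeneous (t x u v k : R) : Omega u v -> 0 < k ->
  pd4 1 f t x (k * u) (k * v) = k * pd4 1 f t x u v.
Proof.
  intros HO Hk. simpl. rewrite (Derive_ext _ (fun y => k * f t y u v)); [apply Derive_scal|].
  intros y. now apply Hhom.
Qed.

Lemma pd4_xx_homogeneous (t x u v k : R) : Omega u v -> 0 < k ->
  pd4 1 (pd4 1 f) t x (k * u) (k * v) = k * pd4 1 (pd4 1 f) t x u v.
Proof.
  intros HO Hk.
  change (Derive (fun y => pd4 1 f t y (k * u) (k * v)) x = k * pd4 1 (pd4 1 f) t x u v).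
  rewrite (Derive_ext _ (fun y => k * pd4 1 f t y u v)); [apply Derive_scal|].
  intros y. now apply pd4_x_homogeneous.
Qed.

Lemma pd4_u_homogeneous (t x u v k : R) : Omega u v -> 0 < k ->
  pd4 2 f t x (k * u) (k * v) = pd4 2 f t x u v.
Proof.
  intros HO Hk. change (Derive (fun z => f t x z (k * v)) (k * u) = pd4 2 f t x u v).
  rewrite (Derive_ext_loc _ (fun z => k * f t x (z / k) v)).
  - assert (HOu : Omega (k * u / k) v) by (replace (k * u / k) with u by (field; lra); exact HO).
    rewrite Derive_scal.
    erewrite is_derive_unique.
    2: { apply (is_derive_comp4 f (fun _ => t) (fun _ => x) (fun z => z / k) (fun _ => v)
                  (k * u) 0 0 (/ k) 0 Hf HOu); auto_derive; auto; field; lra. }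
    cbv beta. replace (k * u / k) with u by (field; lra). field. lra.
  - apply (filter_imp (fun z => Omega z (k * v)));
      [|apply locally_Omega_u, Omega_scale; assumption].
    intros z Hz. replace z with (k * (z / k)) at 1 by (field; lra).
    apply Hhom; [|exact Hk]. replace v with (/ k * (k * v)) by (field; lra).
    replace (z / k) with (/ k * z) by (field; lra).
    apply Omega_scale; [exact Hz | apply Rinv_0_lt_compat, Hk].
Qed.

End Homogeneous.

Lemma smooth2_is_derive_t (Z : R -> R -> R) (t x : R) :
  smooth2 Z -> is_derive (fun s => Z s x) t (d_t Z t x).
Proof. intros HZ. apply Derive_correct, (proj1 (HZ nil t x) 0%nat). Qed.

Lemma smooth2_is_derive_x (Z : R -> R -> R) (t x : R) :
  smooth2 Z -> is_derive (fun y => Z t y) x (d_x Z t x).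
Proof. intros HZ. apply Derive_correct, (proj1 (HZ nil t x) 1%nat). Qed.

Lemma smooth2_is_derive_xx (Z : R -> R -> R) (t x : R) :
  smooth2 Z -> is_derive (fun y => d_x Z t y) x (d_x (d_x Z) t x).
Proof. intros HZ. apply Derive_correct, (proj1 (HZ (1%nat :: nil) t x) 1%nat). Qed.

Definition jet_section (c p r a t0 x0 : R) : R -> R -> R :=
  fun t x => c + p * (x - x0) + / 2 * r * (x - x0) ^ 2 + a * (t - t0).

Section JetSection.
Variables (t0 x0 : R).

Lemma pd2_jet_section_t (c p r a : R) :
  pd2 0 (jet_section c p r a t0 x0) = jet_section a 0 0 0 t0 x0.
Proof.
  do 2 (apply functional_extensionality; intro). simpl.
  apply is_derive_unique. unfold jet_section. auto_derive; auto; ring.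
Qed.

Lemma pd2_jet_section_x (i : nat) (c p r a : R) :
  pd2 (S i) (jet_section c p r a t0 x0) = jet_section p r 0 0 t0 x0.
Proof.
  do 2 (apply functional_extensionality; intro). simpl.
  apply is_derive_unique. unfold jet_section. auto_derive; auto; field.
Qed.

Lemma smooth2_jet_section (c p r a : R) : smooth2 (jet_section c p r a t0 x0).
Proof.
  intros ds t x.
  assert (Hds : exists c' p' r' a', iter_pd2 ds (jet_section c p r a t0 x0)
                                    = jet_section c' p' r' a' t0 x0).
  { induction ds as [|[|i] ds [c' [p' [r' [a' IH]]]]]; cbn [iter_pd2].
    - eauto.
    - rewrite IH, pd2_jet_section_t. eauto.
    - rewrite IH, pd2_jet_section_x. eauto. }
  destruct Hds as [c' [p' [r' [a' ->]]]]. split.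
  - intros [|i]; simpl; unfold jet_section; auto_derive; auto.
  - unfold jet_section. simpl. solve_continuous.
Qed.

Lemma jet_section_at (c p r a : R) : jet_section c p r a t0 x0 t0 x0 = c.
Proof. unfold jet_section. ring. Qed.

Lemma d_t_jet_section (c p r a t x : R) : d_t (jet_section c p r a t0 x0) t x = a.
Proof.
  change (pd2 0 (jet_section c p r a t0 x0) t x = a).
  rewrite pd2_jet_section_t. unfold jet_section. ring.
Qed.

Lemma d_x_jet_section (c p r a t x : R) :
  d_x (jet_section c p r a t0 x0) t x = p + r * (x - x0).
Proof.
  change (pd2 1 (jet_section c p r a t0 x0) t x = p + r * (x - x0)).
  rewrite pd2_jet_section_x. unfold jet_section. ring.
Qed.

Lemma d_xx_jet_section (c p r a t x : R) : d_x (d_x (jet_section c p r a t0 x0)) t x = r.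
Proof.
  change (pd2 1 (pd2 1 (jet_section c p r a t0 x0)) t x = r).
  rewrite !pd2_jet_section_x. unfold jet_section. ring.
Qed.

Lemma d_x_jet_section_at (c p r a t : R) : d_x (jet_section c p r a t0 x0) t x0 = p.
Proof. rewrite d_x_jet_section. ring. Qed.

End JetSection.

Definition affine (c d t0 : R) : R -> R := fun t => c + d * (t - t0).

Lemma smooth1_affine (c d t0 : R) : smooth1 (affine c d t0).
Proof.
  assert (Hn : forall n, exists k, Derive_n (affine c d t0) (S n) = fun _ => k).
  { induction n as [|n [k IH]].
    - exists d. apply functional_extensionality. intros t. apply is_derive_unique.
      unfold affine. auto_derive; auto; ring.
    - exists 0. simpl in *. rewrite IH. apply functional_extensionality. intros t.
      apply Derive_const. }
  intros [|[|n]] t.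
  - exact I.
  - unfold affine. simpl. auto_derive. auto.
  - destruct (Hn n) as [k Hk]. change (ex_derive (Derive_n (affine c d t0) (S n)) t).
    rewrite Hk. apply ex_derive_const.
Qed.

Lemma affine_at (c d t0 : R) : affine c d t0 t0 = c.
Proof. unfold affine. ring. Qed.

(* gamma |psi|^(gamma - 2): the u- and v-derivatives of |psi|^gamma are dabsg u and dabsg v. *)
Definition dabsg (gamma : R) (j : Jet) : R :=
  gamma * Rpower (j 2%nat ^ 2 + j 3%nat ^ 2) (gamma / 2 - 1).

Lemma is_derive_Rpower_base (x y : R) :
  0 < x -> is_derive (fun z => Rpower z y) x (y * Rpower x (y - 1)).
Proof. intros Hx. now apply is_derive_Reals, derivable_pt_lim_power. Qed.

Ltac pdJ_compute HO :=
  unfold pdJ, NLS_E1, NLS_E2, absg, dabsg, jupd; cbn [Nat.eqb];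
  apply is_derive_unique; auto_derive;
  [ try (eexists; apply is_derive_Rpower_base, HO) ..
  | try rewrite (is_derive_unique _ _ _ (is_derive_Rpower_base _ _ HO)); simpl; field ].

Section Linearization.
Variables (gamma : R) (V1 V2 : R -> R) (j : Jet).
Hypothesis HO : Omega (j 2%nat) (j 3%nat).

Lemma sum_pdJ_NLS_E1 (c : nat -> R) :
  sum_f_R0 (fun k => c k * pdJ k (NLS_E1 gamma V1 V2) j) 9 =
  c 0%nat * pdJ 0 (NLS_E1 gamma V1 V2) j
  + c 2%nat * (absg gamma j + V1 (j 0%nat) + dabsg gamma j * j 2%nat * j 2%nat)
  + c 3%nat * (dabsg gamma j * j 3%nat * j 2%nat - V2 (j 0%nat)) - c 6%nat + c 8%nat.
Proof.
  assert (D1 : pdJ 1 (NLS_E1 gamma V1 V2) j = 0) by pdJ_compute HO.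
  assert (D2 : pdJ 2 (NLS_E1 gamma V1 V2) j
               = absg gamma j + V1 (j 0%nat) + dabsg gamma j * j 2%nat * j 2%nat) by pdJ_compute HO.
  assert (D3 : pdJ 3 (NLS_E1 gamma V1 V2) j
               = dabsg gamma j * j 3%nat * j 2%nat - V2 (j 0%nat)) by pdJ_compute HO.
  assert (D4 : pdJ 4 (NLS_E1 gamma V1 V2) j = 0) by pdJ_compute HO.
  assert (D5 : pdJ 5 (NLS_E1 gamma V1 V2) j = 0) by pdJ_compute HO.
  assert (D6 : pdJ 6 (NLS_E1 gamma V1 V2) j = -1) by pdJ_compute HO.
  assert (D7 : pdJ 7 (NLS_E1 gamma V1 V2) j = 0) by pdJ_compute HO.
  assert (D8 : pdJ 8 (NLS_E1 gamma V1 V2) j = 1) by pdJ_compute HO.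
  assert (D9 : pdJ 9 (NLS_E1 gamma V1 V2) j = 0) by pdJ_compute HO.
  cbn [sum_f_R0]. rewrite D1, D2, D3, D4, D5, D6, D7, D8, D9. ring.
Qed.

Lemma sum_pdJ_NLS_E2 (c : nat -> R) :
  sum_f_R0 (fun k => c k * pdJ k (NLS_E2 gamma V1 V2) j) 9 =
  c 0%nat * pdJ 0 (NLS_E2 gamma V1 V2) j
  + c 2%nat * (dabsg gamma j * j 2%nat * j 3%nat + V2 (j 0%nat))
  + c 3%nat * (absg gamma j + V1 (j 0%nat) + dabsg gamma j * j 3%nat * j 3%nat)
  + c 4%nat + c 9%nat.
Proof.
  assert (D1 : pdJ 1 (NLS_E2 gamma V1 V2) j = 0) by pdJ_compute HO.
  assert (D2 : pdJ 2 (NLS_E2 gamma V1 V2) j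
               = dabsg gamma j * j 2%nat * j 3%nat + V2 (j 0%nat)) by pdJ_compute HO.
  assert (D3 : pdJ 3 (NLS_E2 gamma V1 V2) j
               = absg gamma j + V1 (j 0%nat) + dabsg gamma j * j 3%nat * j 3%nat) by pdJ_compute HO.
  assert (D4 : pdJ 4 (NLS_E2 gamma V1 V2) j = 1) by pdJ_compute HO.
  assert (D5 : pdJ 5 (NLS_E2 gamma V1 V2) j = 0) by pdJ_compute HO.
  assert (D6 : pdJ 6 (NLS_E2 gamma V1 V2) j = 0) by pdJ_compute HO.
  assert (D7 : pdJ 7 (NLS_E2 gamma V1 V2) j = 0) by pdJ_compute HO.
  assert (D8 : pdJ 8 (NLS_E2 gamma V1 V2) j = 0) by pdJ_compute HO.
  assert (D9 : pdJ 9 (NLS_E2 gamma V1 V2) j = 1) by pdJ_compute HO.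
  cbn [sum_f_R0]. rewrite D1, D2, D3, D4, D5, D6, D7, D8, D9. ring.
Qed.

End Linearization.

Lemma pdJ_t_NLS_E1_affine (gamma c1 d1 c2 d2 t0 : R) (j : Jet) :
  pdJ 0 (NLS_E1 gamma (affine c1 d1 t0) (affine c2 d2 t0)) j = d1 * j 2%nat - d2 * j 3%nat.
Proof.
  unfold pdJ, NLS_E1, absg, affine, jupd; cbn [Nat.eqb].
  apply is_derive_unique. auto_derive; auto; ring.
Qed.

(** * Prolongation along a section *)

Section TotalDerivatives.
Variables (U W : R -> R -> R).
Hypotheses (HU : smooth2 U) (HW : smooth2 W).

Definition tot_t (g : fun4) (t x : R) : R :=
  along (pd4 0 g) U W t x + along (pd4 2 g) U W t x * d_t U t x
  + along (pd4 3 g) U W t x * d_t W t x.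

Definition tot_x (g : fun4) (t x : R) : R :=
  along (pd4 1 g) U W t x + along (pd4 2 g) U W t x * d_x U t x
  + along (pd4 3 g) U W t x * d_x W t x.

Definition tot_xx (g : fun4) (t x : R) : R :=
  tot_x (pd4 1 g) t x
  + tot_x (pd4 2 g) t x * d_x U t x + along (pd4 2 g) U W t x * d_x (d_x U) t x
  + tot_x (pd4 3 g) t x * d_x W t x + along (pd4 3 g) U W t x * d_x (d_x W) t x.

Lemma locally_Omega_section_t (t x : R) :
  Omega (U t x) (W t x) -> locally t (fun s => Omega (U s x) (W s x)).
Proof.
  intros HO. apply locally_Omega_comp; [..| exact HO];
    apply (ex_derive_continuous (V := R_NormedModule)); eexists;
    apply smooth2_is_derive_t; assumption.
Qed.

Lemma locally_Omega_section_x (t x : R) :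
  Omega (U t x) (W t x) -> locally x (fun y => Omega (U t y) (W t y)).
Proof.
  intros HO. apply locally_Omega_comp; [..| exact HO];
    apply (ex_derive_continuous (V := R_NormedModule)); eexists;
    apply smooth2_is_derive_x; assumption.
Qed.

Lemma is_derive_along_t (g : fun4) (t x : R) :
  smooth_on_Omega g -> Omega (U t x) (W t x) ->
  is_derive (fun s => along g U W s x) t (tot_t g t x).
Proof.
  intros Hg HO. eapply is_derive_eq.
  - apply (is_derive_comp4 g (fun s => s) (fun _ => x) (fun s => U s x) (fun s => W s x) t 1 0);
      [exact Hg | exact HO | auto_derive; auto | auto_derive; auto
      | apply smooth2_is_derive_t; assumption ..].
  - unfold tot_t, along. ring.
Qed.

Lemma d_t_along (g : fun4) (t x : R) :
  smooth_on_Omega g -> Omega (U t x) (W t x) -> d_t (along g U W) t x = tot_t g t x.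
Proof. intros Hg HO. exact (is_derive_unique _ _ _ (is_derive_along_t g t x Hg HO)). Qed.

Lemma is_derive_along_x (g : fun4) (t x : R) :
  smooth_on_Omega g -> Omega (U t x) (W t x) ->
  is_derive (fun y => along g U W t y) x (tot_x g t x).
Proof.
  intros Hg HO. eapply is_derive_eq.
  - apply (is_derive_comp4 g (fun _ => t) (fun y => y) (fun y => U t y) (fun y => W t y) x 0 1);
      [exact Hg | exact HO | auto_derive; auto | auto_derive; auto
      | apply smooth2_is_derive_x; assumption ..].
  - unfold tot_x, along. ring.
Qed.

Lemma is_derive_tot_x (g : fun4) (t x : R) :
  smooth_on_Omega g -> Omega (U t x) (W t x) ->
  is_derive (fun y => tot_x g t y) x (tot_xx g t x).
Proof.
  intros Hg HO.
  pose proof (fun i => is_derive_along_x (pd4 i g) t x (smooth_on_Omega_pd4 g i Hg) HO) as D.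
  eapply is_derive_eq.
  - unfold tot_x. apply is_derive_Rplus; [apply is_derive_Rplus|]; [exact (D 1%nat) | ..];
      apply is_derive_Rmult; [exact (D 2%nat) | apply smooth2_is_derive_xx, HU
                              | exact (D 3%nat) | apply smooth2_is_derive_xx, HW].
  - unfold tot_xx, along. ring.
Qed.

Lemma d_x_along_near (g : fun4) (t x : R) :
  smooth_on_Omega g -> Omega (U t x) (W t x) ->
  locally x (fun y => d_x (along g U W) t y = tot_x g t y).
Proof.
  intros Hg HO.
  exact (filter_imp _ _ (fun y Hy => is_derive_unique _ _ _ (is_derive_along_x g t y Hg Hy))
                    (locally_Omega_section_x t x HO)).
Qed.

End TotalDerivatives.

Section VanishingTau.
Variables (Q : VF) (U W : R -> R -> R) (t x : R).
Hypotheses (HQ : smooth_VF Q) (Htau : forall t x u v, Omega u v -> vf_tau Q t x u v = 0).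
Hypotheses (HU : smooth2 U) (HW : smooth2 W) (HO : Omega (U t x) (W t x)).

Lemma tauS_vanishes : tauS Q U W t x = 0.
Proof. exact (Htau _ _ _ _ HO). Qed.

Lemma d_t_tauS_vanishes : d_t (tauS Q U W) t x = 0.
Proof.
  unfold d_t. rewrite (Derive_ext_loc _ (fun _ => 0)); [apply Derive_const|].
  exact (filter_imp _ _ (fun s Hs => Htau _ _ _ _ Hs) (locally_Omega_section_t U W HU HW t x HO)).
Qed.

Lemma d_x_tauS_near : locally x (fun y => d_x (tauS Q U W) t y = 0).
Proof.
  apply (filter_imp (fun y => locally y (fun z => Omega (U t z) (W t z)))).
  - intros y Hy. unfold d_x. rewrite (Derive_ext_loc _ (fun _ => 0)); [apply Derive_const|].
    exact (filter_imp _ _ (fun z Hz => Htau _ _ _ _ Hz) Hy).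
  - apply locally_locally, locally_Omega_section_x; assumption.
Qed.

Lemma prol_t_tau0 (g : fun4) (Z : R -> R -> R) : smooth_on_Omega g ->
  prol_t Q U W g Z t x = tot_t U W g t x - d_x Z t x * tot_t U W (vf_xi Q) t x.
Proof.
  intros Hg. unfold prol_t, xiS.
  rewrite d_t_tauS_vanishes.
  rewrite !d_t_along by (apply Hg || apply HQ || assumption).
  ring.
Qed.

Lemma prol_xx_tau0 (g : fun4) (Z : R -> R -> R) : smooth_on_Omega g -> smooth2 Z ->
  prol_xx Q U W g Z t x =
  tot_xx U W g t x - 2 * d_x (d_x Z) t x * tot_x U W (vf_xi Q) t x
  - d_x Z t x * tot_xx U W (vf_xi Q) t x.
Proof.
  intros Hg HZ. assert (Hxi : smooth_on_Omega (vf_xi Q)) by apply HQ.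
  unfold prol_xx, xiS.
  rewrite (locally_singleton _ _ d_x_tauS_near).
  rewrite (locally_singleton _ _ (d_x_along_near U W HU HW _ t x Hxi HO)).
  change (d_x (prol_x Q U W g Z) t x) with (Derive (fun y => prol_x Q U W g Z t y) x).
  rewrite (Derive_ext_loc _ (fun y => tot_x U W g t y - d_x Z t y * tot_x U W (vf_xi Q) t y)).
  - assert (D : is_derive (fun y => tot_x U W g t y - d_x Z t y * tot_x U W (vf_xi Q) t y) x
                  (tot_xx U W g t x - (d_x (d_x Z) t x * tot_x U W (vf_xi Q) t x
                                       + d_x Z t x * tot_xx U W (vf_xi Q) t x))).
    { apply is_derive_Rminus; [|apply is_derive_Rmult];
        [apply is_derive_tot_x | apply smooth2_is_derive_xx | apply is_derive_tot_x];
        assumption. }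
    erewrite is_derive_unique by exact D. ring.
  - generalize (filter_and _ _ (filter_and _ _ (d_x_along_near U W HU HW g t x Hg HO)
                                               (d_x_along_near U W HU HW _ t x Hxi HO))
                               d_x_tauS_near).
    apply filter_imp. intros y [[Hg' Hxi'] Htau']. unfold prol_x, xiS.
    rewrite Hg', Hxi', Htau'. ring.
Qed.

Lemma prol2_apply_NLS_E1_tau0 (gamma : R) (V1 V2 : R -> R) :
  prol2_apply Q U W (NLS_E1 gamma V1 V2) t x =
    along (vf_eta Q) U W t x
      * (absg gamma (jet2 U W t x) + V1 t + dabsg gamma (jet2 U W t x) * U t x * U t x)
  + along (vf_theta Q) U W t x * (dabsg gamma (jet2 U W t x) * W t x * U t x - V2 t)
  - (tot_t U W (vf_theta Q) t x - d_x W t x * tot_t U W (vf_xi Q) t x)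
  + (tot_xx U W (vf_eta Q) t x - 2 * d_x (d_x U) t x * tot_x U W (vf_xi Q) t x
     - d_x U t x * tot_xx U W (vf_xi Q) t x).
Proof.
  unfold prol2_apply. rewrite sum_pdJ_NLS_E1 by exact HO. cbn [prol2 jet2].
  rewrite tauS_vanishes, prol_t_tau0, prol_xx_tau0 by (apply HQ || assumption).
  ring.
Qed.

Lemma prol2_apply_NLS_E2_tau0 (gamma : R) (V1 V2 : R -> R) :
  prol2_apply Q U W (NLS_E2 gamma V1 V2) t x =
    along (vf_eta Q) U W t x * (dabsg gamma (jet2 U W t x) * U t x * W t x + V2 t)
  + along (vf_theta Q) U W t x
      * (absg gamma (jet2 U W t x) + V1 t + dabsg gamma (jet2 U W t x) * W t x * W t x)
  + (tot_t U W (vf_eta Q) t x - d_x U t x * tot_t U W (vf_xi Q) t x)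
  + (tot_xx U W (vf_theta Q) t x - 2 * d_x (d_x W) t x * tot_x U W (vf_xi Q) t x
     - d_x W t x * tot_xx U W (vf_xi Q) t x).
Proof.
  unfold prol2_apply. rewrite sum_pdJ_NLS_E2 by exact HO. cbn [prol2 jet2].
  rewrite tauS_vanishes, prol_t_tau0, prol_xx_tau0 by (apply HQ || assumption).
  ring.
Qed.

End VanishingTau.

Lemma tot_ext_Omega (F G : fun4) (U W : R -> R -> R) (t x : R) :
  (forall t x u v, Omega u v -> F t x u v = G t x u v) -> Omega (U t x) (W t x) ->
  along F U W t x = along G U W t x /\ tot_t U W F t x = tot_t U W G t x /\
  tot_x U W F t x = tot_x U W G t x /\ tot_xx U W F t x = tot_xx U W G t x.
Proof.
  intros HFG HO. unfold tot_xx, tot_t, tot_x, along.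
  rewrite !(pd4_ext_Omega (pd4 1 F) (pd4 1 G) (pd4_ext_Omega F G HFG 1)),
          !(pd4_ext_Omega (pd4 2 F) (pd4 2 G) (pd4_ext_Omega F G HFG 2)),
          !(pd4_ext_Omega (pd4 3 F) (pd4 3 G) (pd4_ext_Omega F G HFG 3)),
          !(pd4_ext_Omega F G HFG), HFG by exact HO.
  repeat split.
Qed.

(** * Sufficiency *)

Section Sufficiency.
Variables (c1 c2 c3 : R) (Q : VF).
Hypothesis HQ : vf_eq_on_Omega Q (vf_comb c1 c2 c3 vfM (vfG (fun _ => 1)) (vfG (fun t => t))).

Lemma tau_of_vf_eq (t x u v : R) : Omega u v -> vf_tau Q t x u v = poly4 0 0 0 0 0 0 0 t x u v.
Proof. intros HO. rewrite (proj1 (HQ t x u v HO)). cbn. unfold poly4. ring. Qed.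

Lemma xi_of_vf_eq (t x u v : R) : Omega u v -> vf_xi Q t x u v = poly4 c2 c3 0 0 0 0 0 t x u v.
Proof. intros HO. rewrite (proj1 (proj2 (HQ t x u v HO))). cbn. unfold poly4. ring. Qed.

Lemma eta_of_vf_eq (t x u v : R) :
  Omega u v -> vf_eta Q t x u v = poly4 0 0 0 0 (- c1) 0 (- (c3 / 2)) t x u v.
Proof.
  intros HO. rewrite (proj1 (proj2 (proj2 (HQ t x u v HO)))). cbn.
  rewrite Derive_const, Derive_id. unfold poly4. field.
Qed.

Lemma theta_of_vf_eq (t x u v : R) :
  Omega u v -> vf_theta Q t x u v = poly4 0 0 0 c1 0 (c3 / 2) 0 t x u v.
Proof.
  intros HO. rewrite (proj2 (proj2 (proj2 (HQ t x u v HO)))). cbn.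
  rewrite Derive_const, Derive_id. unfold poly4. field.
Qed.

Lemma smooth_VF_of_vf_eq : smooth_VF Q.
Proof.
  split; [|split; [|split]]; (eapply smooth_on_Omega_ext; [|apply smooth_on_Omega_poly4]);
    intros t x u v HO; symmetry;
    [apply tau_of_vf_eq | apply xi_of_vf_eq | apply eta_of_vf_eq | apply theta_of_vf_eq];
    exact HO.
Qed.

Lemma prol2_apply_of_vf_eq (gamma : R) (V1 V2 : R -> R) (U W : R -> R -> R) (t x : R) :
  smooth2 U -> smooth2 W -> Omega (U t x) (W t x) ->
  prol2_apply Q U W (NLS_E1 gamma V1 V2) t x
    = - (c1 + c3 / 2 * x) * NLS_E2 gamma V1 V2 (jet2 U W t x) /\
  prol2_apply Q U W (NLS_E2 gamma V1 V2) t x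
    = (c1 + c3 / 2 * x) * NLS_E1 gamma V1 V2 (jet2 U W t x).
Proof.
  intros HU HW HO.
  rewrite prol2_apply_NLS_E1_tau0, prol2_apply_NLS_E2_tau0
    by (apply smooth_VF_of_vf_eq || assumption
        || (intros; rewrite tau_of_vf_eq by assumption; unfold poly4; ring)).
  destruct (tot_ext_Omega _ _ U W t x xi_of_vf_eq HO) as [_ [Txi [Xxi XXxi]]].
  destruct (tot_ext_Omega _ _ U W t x eta_of_vf_eq HO) as [Aeta [Teta [_ XXeta]]].
  destruct (tot_ext_Omega _ _ U W t x theta_of_vf_eq HO) as [Atheta [Ttheta [_ XXtheta]]].
  rewrite Txi, Xxi, XXxi, Aeta, Teta, XXeta, Atheta, Ttheta, XXtheta.
  unfold tot_xx, tot_t, tot_x, along.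
  repeat first [rewrite pd4_poly4_t | rewrite pd4_poly4_x | rewrite pd4_poly4_u
               | rewrite pd4_poly4_v].
  unfold NLS_E1, NLS_E2, poly4. cbn [jet2]. split; field.
Qed.

End Sufficiency.

Lemma invariance_of_vf_eq (gamma : R) (Q : VF) (c1 c2 c3 : R) :
  vf_eq_on_Omega Q (vf_comb c1 c2 c3 vfM (vfG (fun _ => 1)) (vfG (fun t => t))) ->
  forall V1 V2 : R -> R, in_max_Lie_alg gamma V1 V2 Q.
Proof.
  intros HQ V1 V2. split; [exact (smooth_VF_of_vf_eq c1 c2 c3 Q HQ)|].
  intros U W t x HU HW HO HE1 HE2.
  destruct (prol2_apply_of_vf_eq c1 c2 c3 Q HQ gamma V1 V2 U W t x HU HW HO) as [-> ->].
  rewrite HE1, HE2. split; ring.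
Qed.

(** * Necessity *)

Section Necessity.
Variables (gamma : R) (Q : VF).
Hypothesis Hgamma : gamma <> 0.
Hypothesis HQ : forall V1 V2 : R -> R, smooth1 V1 -> smooth1 V2 -> in_max_Lie_alg gamma V1 V2 Q.

Local Notation xi := (vf_xi Q).
Local Notation eta := (vf_eta Q).
Local Notation theta := (vf_theta Q).

Lemma smooth_VF_of_invariance : smooth_VF Q.
Proof. exact (proj1 (HQ _ _ (smooth1_affine 0 0 0) (smooth1_affine 0 0 0))). Qed.

Lemma smooth_theta : smooth_on_Omega theta.
Proof. apply smooth_VF_of_invariance. Qed.

Lemma smooth_xi : smooth_on_Omega xi.
Proof. apply smooth_VF_of_invariance. Qed.

Lemma invariance_at_section (V1 V2 : R -> R) (U W : R -> R -> R) (t x : R) :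
  smooth1 V1 -> smooth1 V2 -> smooth2 U -> smooth2 W -> Omega (U t x) (W t x) ->
  NLS_E1 gamma V1 V2 (jet2 U W t x) = 0 -> NLS_E2 gamma V1 V2 (jet2 U W t x) = 0 ->
  prol2_apply Q U W (NLS_E1 gamma V1 V2) t x = 0 /\ prol2_apply Q U W (NLS_E2 gamma V1 V2) t x = 0.
Proof. intros HV1 HV2. exact (proj2 (HQ V1 V2 HV1 HV2) U W t x). Qed.

Lemma tau_vanishes (t0 x0 u0 v0 : R) : Omega u0 v0 -> vf_tau Q t0 x0 u0 v0 = 0.
Proof.
  intros HO.
  set (U := jet_section u0 0 0 0 t0 x0). set (W := jet_section v0 0 0 0 t0 x0).
  set (A := Rpower (u0 ^ 2 + v0 ^ 2) (gamma / 2)).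
  set (E a b := NLS_E1 gamma (affine (- A) a t0) (affine 0 b t0)).
  assert (HOj : Omega (U t0 x0) (W t0 x0)) by (unfold U, W; rewrite !jet_section_at; exact HO).
  assert (Hinv : forall a b, prol2_apply Q U W (E a b) t0 x0 = 0).
  { intros a b. apply (invariance_at_section _ _ U W t0 x0); try apply smooth1_affine;
      try apply smooth2_jet_section; try exact HOj;
      unfold NLS_E1, NLS_E2, absg; cbn [jet2]; unfold U, W;
      rewrite !jet_section_at, !d_t_jet_section, !d_xx_jet_section, !affine_at; unfold A; ring. }
  assert (Hlin : forall a b, prol2_apply Q U W (E a b) t0 x0
                  = prol2 Q U W 0 t0 x0 * (a * u0 - b * v0) + prol2_apply Q U W (E 0 0) t0 x0).
  { intros a b. unfold prol2_apply, E. rewrite !sum_pdJ_NLS_E1 by exact HOj.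
    rewrite !pdJ_t_NLS_E1_affine. cbn [jet2]. rewrite !affine_at. unfold U, W.
    rewrite !jet_section_at. ring. }
  assert (Htau : prol2 Q U W 0 t0 x0 = vf_tau Q t0 x0 u0 v0)
    by (cbn; unfold tauS, along, U, W; now rewrite !jet_section_at).
  pose proof (Hlin 1 0) as H1. pose proof (Hlin 0 1) as H2.
  rewrite !Hinv, Htau in H1, H2. apply (Omega_mult_eq0 _ u0 v0 HO); lra.
Qed.

Section DeterminingEquations.
Variables (t0 x0 u0 v0 : R).
Hypothesis HO : Omega u0 v0.

Local Notation "'P' g" := (g t0 x0 u0 v0) (at level 10, g at level 9).
Local Notation A := (Rpower (u0 ^ 2 + v0 ^ 2) (gamma / 2)).
Local Notation B := (gamma * Rpower (u0 ^ 2 + v0 ^ 2) (gamma / 2 - 1)).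
Local Notation Dt g al be := (P (pd4 0 g) + P (pd4 2 g) * al + P (pd4 3 g) * be).
Local Notation Dx g p q := (P (pd4 1 g) + P (pd4 2 g) * p + P (pd4 3 g) * q).
Local Notation Dxx g p q r s :=
  (Dx (pd4 1 g) p q + Dx (pd4 2 g) p q * p + P (pd4 2 g) * r
   + Dx (pd4 3 g) p q * q + P (pd4 3 g) * s).

(* The 2-jet (u, v, u_x, v_x, u_xx, v_xx) = (u0, v0, p, q, r, s) with u_t, v_t solving the
   equation for the constant potential V = a + i b. *)
Lemma determining_system (p q r s a b al be : R) :
  al = - (s + (A + a) * v0 + b * u0) -> be = r + (A + a) * u0 - b * v0 ->
  P eta * (A + a + B * u0 * u0) + P theta * (B * v0 * u0 - b)
  - (Dt theta al be - q * Dt xi al be)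
  + (Dxx eta p q r s - 2 * r * Dx xi p q - p * Dxx xi p q r s) = 0 /\
  P eta * (B * u0 * v0 + b) + P theta * (A + a + B * v0 * v0)
  + (Dt eta al be - p * Dt xi al be)
  + (Dxx theta p q r s - 2 * s * Dx xi p q - q * Dxx xi p q r s) = 0.
Proof.
  intros Hal Hbe.
  set (U := jet_section u0 p r al t0 x0). set (W := jet_section v0 q s be t0 x0).
  assert (HOj : Omega (U t0 x0) (W t0 x0)) by (unfold U, W; rewrite !jet_section_at; exact HO).
  destruct (invariance_at_section (affine a 0 t0) (affine b 0 t0) U W t0 x0) as [H1 H2];
    try apply smooth1_affine; try apply smooth2_jet_section; try exact HOj;
    try (unfold NLS_E1, NLS_E2, absg; cbn [jet2]; unfold U, W;
         rewrite !jet_section_at, !d_t_jet_section, !d_xx_jet_section, !affine_at; subst; ring).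
  pose proof smooth_VF_of_invariance as HsQ.
  rewrite prol2_apply_NLS_E1_tau0 in H1
    by (apply HsQ || apply tau_vanishes || apply smooth2_jet_section || exact HOj).
  rewrite prol2_apply_NLS_E2_tau0 in H2
    by (apply HsQ || apply tau_vanishes || apply smooth2_jet_section || exact HOj).
  unfold tot_xx, tot_t, tot_x, along, absg, dabsg, U, W in H1, H2. cbn [jet2] in H1, H2.
  rewrite !jet_section_at, !d_t_jet_section, !d_x_jet_section_at, !d_xx_jet_section,
    !affine_at in H1, H2.
  split; lra.
Qed.

Local Tactic Notation "jet_equations" constr(p) constr(q) constr(r) constr(s) constr(a) constr(b)
  ident(H1) ident(H2) :=
  destruct (determining_system p q r s a b _ _ eq_refl eq_refl) as [H1 H2].

Lemma xi_x_vanishes_cauchy_riemann :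
  P (pd4 1 xi) = 0 /\ P (pd4 3 theta) = P (pd4 2 eta) /\ P (pd4 2 theta) = - P (pd4 3 eta).
Proof.
  jet_equations 0 0 0 0 0 0 A1 A2. jet_equations 0 0 1 0 0 0 B1 B2. jet_equations 0 0 0 1 0 0 C1 C2.
  repeat split; lra.
Qed.

Lemma xi_u_v_vanish : P (pd4 2 xi) = 0 /\ P (pd4 3 xi) = 0.
Proof.
  destruct xi_x_vanishes_cauchy_riemann as [E1 [E2 E3]].
  jet_equations 1 0 0 0 0 0 A1 A2. jet_equations 1 0 1 0 0 0 B1 B2.
  jet_equations 0 1 0 0 0 0 C1 C2. jet_equations 0 1 1 0 0 0 D1 D2.
  split; lra.
Qed.

Lemma euler_eta_theta :
  P eta = u0 * P (pd4 2 eta) + v0 * P (pd4 3 eta) /\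
  P theta = u0 * P (pd4 2 theta) + v0 * P (pd4 3 theta).
Proof.
  destruct xi_x_vanishes_cauchy_riemann as [E1 [E2 E3]].
  jet_equations 0 0 0 0 0 0 A1 A2. jet_equations 0 0 0 0 1 0 B1 B2. jet_equations 0 0 0 0 0 1 C1 C2.
  split; lra.
Qed.

Lemma theta_uu_vanishes_xi_t :
  P (pd4 2 (pd4 2 theta)) = 0 /\ P (pd4 2 (pd4 1 theta)) + P (pd4 1 (pd4 2 theta)) = P (pd4 0 xi).
Proof.
  destruct xi_u_v_vanish as [E1 E2].
  jet_equations 0 0 0 0 0 0 A1 A2. jet_equations 1 0 0 0 0 0 B1 B2.
  jet_equations (-1) 0 0 0 0 0 C1 C2.
  rewrite E1, E2 in A2, B2, C2.
  split; lra.
Qed.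

Lemma zeroth_order_equations :
  gamma * u0 * A * P (pd4 2 eta) + P (pd4 1 (pd4 1 eta)) - P (pd4 0 theta) = 0 /\
  gamma * v0 * A * P (pd4 2 eta) + P (pd4 0 eta) + P (pd4 1 (pd4 1 theta)) = 0.
Proof.
  jet_equations 0 0 0 0 0 0 Z1 Z2.
  destruct euler_eta_theta as [H1 H2].
  destruct xi_x_vanishes_cauchy_riemann as [_ [C1 C2]].
  rewrite H1, H2, C1, C2 in Z1, Z2. rewrite (Rpower_pred _ (gamma / 2) HO) in Z1, Z2 |- *.
  split; lra.
Qed.

End DeterminingEquations.

Lemma eta_homogeneous (t x u v k : R) : Omega u v -> 0 < k ->
  eta t x (k * u) (k * v) = k * eta t x u v.
Proof.
  apply homogeneous_of_euler; [apply smooth_VF_of_invariance|].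
  intros; now apply euler_eta_theta.
Qed.

Lemma theta_homogeneous (t x u v k : R) : Omega u v -> 0 < k ->
  theta t x (k * u) (k * v) = k * theta t x u v.
Proof.
  apply homogeneous_of_euler; [apply smooth_VF_of_invariance|].
  intros; now apply euler_eta_theta.
Qed.

Lemma eta_u_vanishes (t x u v : R) : Omega u v -> pd4 2 eta t x u v = 0.
Proof.
  intros HO.
  assert (HO2 : Omega (2 * u) (2 * v)) by (apply Omega_scale; [exact HO | lra]).
  assert (Hseta : smooth_on_Omega eta) by apply smooth_VF_of_invariance.
  destruct (zeroth_order_equations t x u v HO) as [Z1 Z2].
  destruct (zeroth_order_equations t x (2 * u) (2 * v) HO2) as [Z1' Z2'].
  replace ((2 * u) ^ 2 + (2 * v) ^ 2) with (4 * (u ^ 2 + v ^ 2)) in Z1', Z2' by ring.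
  rewrite <- Rpower_mult_distr in Z1', Z2' by (lra || exact HO).
  rewrite (pd4_u_homogeneous eta Hseta eta_homogeneous) in Z1', Z2' by (exact HO || lra).
  rewrite (pd4_xx_homogeneous eta eta_homogeneous), (pd4_t_homogeneous theta theta_homogeneous)
    in Z1' by (exact HO || lra).
  rewrite (pd4_t_homogeneous eta eta_homogeneous), (pd4_xx_homogeneous theta theta_homogeneous)
    in Z2' by (exact HO || lra).
  pose proof (Rpower4_neq1 gamma Hgamma) as Hc.
  assert (HA : 0 < Rpower (u ^ 2 + v ^ 2) (gamma / 2)) by apply exp_pos.
  set (c := Rpower 4 (gamma / 2)) in *. set (A := Rpower (u ^ 2 + v ^ 2) (gamma / 2)) in *.
  set (e := pd4 2 eta t x u v) in *.
  assert (Hn : gamma * A * (c - 1) <> 0)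
    by (repeat apply Rmult_integral_contrapositive_currified; lra).
  apply (Omega_mult_eq0 e u v HO).
  - apply (Rmult_eq_reg_l (gamma * A * (c - 1))); [lra | exact Hn].
  - apply (Rmult_eq_reg_l (gamma * A * (c - 1))); [lra | exact Hn].
Qed.

Lemma theta_v_vanishes (t x u v : R) : Omega u v -> pd4 3 theta t x u v = 0.
Proof.
  intros HO. rewrite (proj1 (proj2 (xi_x_vanishes_cauchy_riemann t x u v HO))).
  now apply eta_u_vanishes.
Qed.

Definition m_coef (t x : R) : R := pd4 2 theta t x 1 1.

Lemma theta_at_v1 (t x z : R) : theta t x z 1 = m_coef t x * z.
Proof.
  assert (Hu : pd4 2 theta t x z 1 = m_coef t x).
  { apply (Derive_zero_const (fun w => pd4 2 theta t x w 1)); intros w.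
    - apply (smooth_on_Omega_ex_pd4 (pd4 2 theta) 2);
        [apply smooth_on_Omega_pd4, smooth_theta | apply Omega_with_1].
    - apply theta_uu_vanishes_xi_t, Omega_with_1. }
  rewrite (proj2 (euler_eta_theta t x z 1 (proj1 (Omega_with_1 z)))), Hu,
    theta_v_vanishes by apply Omega_with_1.
  ring.
Qed.

Lemma theta_form (t x u v : R) : Omega u v -> theta t x u v = m_coef t x * u.
Proof.
  intros HO. destruct (Req_dec u 0) as [->|Hu].
  - rewrite (proj2 (euler_eta_theta t x 0 v HO)), theta_v_vanishes by exact HO. ring.
  - rewrite <- theta_at_v1. apply (Derive_zero_const (fun w => theta t x u w)); intros w.
    + apply (smooth_on_Omega_ex_pd4 theta 3); [apply smooth_theta | apply Omega_of_neq0; auto].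
    + apply theta_v_vanishes, Omega_of_neq0; auto.
Qed.

Lemma eta_form (t x u v : R) : Omega u v -> eta t x u v = - m_coef t x * v.
Proof.
  intros HO. rewrite (proj1 (euler_eta_theta t x u v HO)), eta_u_vanishes by exact HO.
  destruct (Req_dec v 0) as [->|Hv]; [ring|].
  assert (Htheta_u : pd4 2 theta t x u v = m_coef t x).
  { simpl. rewrite (Derive_ext _ (fun z => m_coef t x * z)).
    - apply is_derive_unique. auto_derive; auto; ring.
    - intros z. apply theta_form, Omega_of_neq0; auto. }
  pose proof (proj2 (proj2 (xi_x_vanishes_cauchy_riemann t x u v HO))) as Hcr.
  replace (pd4 3 eta t x u v) with (- m_coef t x) by lra. ring.
Qed.

Lemma ex_derive_m_coef_t (t x : R) : ex_derive (fun s => m_coef s x) t.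
Proof.
  apply (smooth_on_Omega_ex_pd4 (pd4 2 theta) 0);
    [apply smooth_on_Omega_pd4, smooth_theta | apply Omega_with_1].
Qed.

Lemma ex_derive_m_coef_x (t x : R) : ex_derive (fun y => m_coef t y) x.
Proof.
  apply (smooth_on_Omega_ex_pd4 (pd4 2 theta) 1);
    [apply smooth_on_Omega_pd4, smooth_theta | apply Omega_with_1].
Qed.

Lemma ex_derive_m_coef_xx (t x : R) : ex_derive (fun y => Derive (fun y' => m_coef t y') y) x.
Proof.
  apply (smooth_on_Omega_ex_pd4 (pd4 1 (pd4 2 theta)) 1);
    [apply smooth_on_Omega_pd4, smooth_on_Omega_pd4, smooth_theta | apply Omega_with_1].
Qed.

Lemma m_coef_t_vanishes (t x : R) : Derive (fun s => m_coef s x) t = 0.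
Proof.
  destruct (zeroth_order_equations t x 1 0 (proj2 (Omega_with_1 0))) as [Z _].
  rewrite eta_u_vanishes in Z by apply Omega_with_1.
  assert (Htheta_t : pd4 0 theta t x 1 0 = Derive (fun s => m_coef s x) t).
  { simpl. apply Derive_ext. intros s. rewrite theta_form by apply Omega_with_1. ring. }
  assert (Heta_xx : pd4 1 (pd4 1 eta) t x 1 0 = 0).
  { change (Derive (fun y => pd4 1 eta t y 1 0) x = 0).
    rewrite (Derive_ext _ (fun _ => 0)); [apply Derive_const|]. intros y. simpl.
    rewrite (Derive_ext _ (fun _ => 0)); [apply Derive_const|]. intros y'.
    rewrite eta_form by apply Omega_with_1. ring. }
  rewrite Htheta_t, Heta_xx in Z. lra.
Qed.

Lemma m_coef_xx_vanishes (t x : R) : Derive (fun y => Derive (fun y' => m_coef t y') y) x = 0.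
Proof.
  destruct (zeroth_order_equations t x 0 1 (proj1 (Omega_with_1 0))) as [Z _].
  assert (Htheta_t : pd4 0 theta t x 0 1 = 0).
  { simpl. rewrite (Derive_ext _ (fun _ => 0)); [apply Derive_const|].
    intros s. rewrite theta_form by apply Omega_with_1. ring. }
  assert (Heta_xx : pd4 1 (pd4 1 eta) t x 0 1
                    = - Derive (fun y => Derive (fun y' => m_coef t y') y) x).
  { change (Derive (fun y => pd4 1 eta t y 0 1) x
            = - Derive (fun y => Derive (fun y' => m_coef t y') y) x).
    rewrite <- Derive_opp. apply Derive_ext. intros y. simpl.
    rewrite <- Derive_opp. apply Derive_ext. intros y'.
    rewrite eta_form by apply Omega_with_1. ring. }
  rewrite Htheta_t, Heta_xx in Z. lra.
Qed.

Lemma xi_t_eq_m_coef_x (t x : R) : pd4 0 xi t x 1 1 = 2 * Derive (fun y => m_coef t y) x.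
Proof.
  rewrite <- (proj2 (theta_uu_vanishes_xi_t t x 1 1 (proj1 (Omega_with_1 1)))).
  assert (E : pd4 2 (pd4 1 theta) t x 1 1 = Derive (fun y => m_coef t y) x).
  { change (Derive (fun z => pd4 1 theta t x z 1) 1 = Derive (fun y => m_coef t y) x).
    rewrite (Derive_ext _ (fun z => z * Derive (fun y => m_coef t y) x)).
    - apply is_derive_unique. auto_derive; auto; ring.
    - intros z. simpl. rewrite (Derive_ext _ (fun y => z * m_coef t y)); [apply Derive_scal|].
      intros y. rewrite theta_at_v1. ring. }
  rewrite E. unfold m_coef. simpl. ring.
Qed.

Lemma m_coef_affine (t x : R) :
  m_coef t x = m_coef 0 0 + Derive (fun y => m_coef 0 y) 0 * x.
Proof.
  set (k := Derive (fun y => m_coef 0 y) 0).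
  assert (Ht : forall t x, m_coef t x = m_coef 0 x).
  { intros t' x'. apply (Derive_zero_const (fun s => m_coef s x')).
    - intros; apply ex_derive_m_coef_t.
    - intros; apply m_coef_t_vanishes. }
  assert (Hk : forall y, Derive (fun y' => m_coef 0 y') y = k).
  { intros y. apply (Derive_zero_const (fun y => Derive (fun y' => m_coef 0 y') y)).
    - intros; apply ex_derive_m_coef_xx.
    - intros; apply m_coef_xx_vanishes. }
  rewrite Ht.
  assert (E : m_coef 0 x - k * x = m_coef 0 0 - k * 0).
  { apply (is_derive_zero_const (fun y => m_coef 0 y - k * y)). intros z _. eapply is_derive_eq.
    - apply is_derive_Rminus; [apply Derive_correct, ex_derive_m_coef_x|].
      apply is_derive_scal. auto_derive; auto.
    - rewrite Hk. ring. }
  lra.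
Qed.

Lemma xi_depends_on_t_only (t x u v : R) : Omega u v -> xi t x u v = xi t 0 1 1.
Proof.
  intros HO.
  assert (Hd : forall i t x u v, Omega u v -> ex_pd4 i xi t x u v)
    by (intros; apply smooth_on_Omega_ex_pd4; [apply smooth_xi | assumption]).
  assert (Hx : xi t x u v = xi t 0 u v).
  { apply (Derive_zero_const (fun y => xi t y u v)); intros y.
    - exact (Hd 1%nat t y u v HO).
    - exact (proj1 (xi_x_vanishes_cauchy_riemann t y u v HO)). }
  assert (Hu : forall w a b, w <> 0 -> xi t 0 a w = xi t 0 b w).
  { intros w a b Hw. apply (Derive_zero_const (fun z => xi t 0 z w)); intros z.
    - apply (Hd 2%nat), Omega_of_neq0; auto.
    - apply xi_u_v_vanish, Omega_of_neq0; auto. }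
  assert (Hv : forall w a b, w <> 0 -> xi t 0 w a = xi t 0 w b).
  { intros w a b Hw. apply (Derive_zero_const (fun z => xi t 0 w z)); intros z.
    - apply (Hd 3%nat), Omega_of_neq0; auto.
    - apply xi_u_v_vanish, Omega_of_neq0; auto. }
  rewrite Hx. destruct (Req_dec v 0) as [->|Hv0].
  - assert (Hu0 : u <> 0) by (intros ->; unfold Omega in HO; lra).
    rewrite (Hv u 0 1 Hu0), (Hu 1 u 1) by lra. reflexivity.
  - rewrite (Hu v u 1 Hv0), (Hv 1 v 1) by lra. reflexivity.
Qed.

Lemma xi_form (t x u v : R) : Omega u v ->
  xi t x u v = xi 0 0 1 1 + 2 * Derive (fun y => m_coef 0 y) 0 * t.
Proof.
  intros HO. rewrite xi_depends_on_t_only by exact HO.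
  set (k := Derive (fun y => m_coef 0 y) 0).
  assert (Hmx : forall s, Derive (fun y => m_coef s y) 0 = k).
  { intros s. rewrite (Derive_ext _ (fun y => m_coef 0 0 + k * y)) by (intros; apply m_coef_affine).
    apply is_derive_unique. auto_derive; auto; ring. }
  assert (E : xi t 0 1 1 - 2 * k * t = xi 0 0 1 1 - 2 * k * 0).
  { apply (is_derive_zero_const (fun s => xi s 0 1 1 - 2 * k * s)). intros s _.
    eapply is_derive_eq.
    - apply is_derive_Rminus.
      + apply Derive_correct, (smooth_on_Omega_ex_pd4 xi 0); [apply smooth_xi | apply Omega_with_1].
      + apply is_derive_scal. auto_derive; auto.
    - change (pd4 0 xi s 0 1 1 - 2 * k * 1 = 0). rewrite xi_t_eq_m_coef_x, Hmx. ring. }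
  lra.
Qed.

Lemma vf_eq_of_invariance :
  exists c1 c2 c3 : R,
    vf_eq_on_Omega Q (vf_comb c1 c2 c3 vfM (vfG (fun _ => 1)) (vfG (fun t => t))).
Proof.
  exists (m_coef 0 0), (xi 0 0 1 1), (2 * Derive (fun y => m_coef 0 y) 0).
  intros t x u v HO. unfold vf_comb, vfM, vfG. cbn [vf_tau vf_xi vf_eta vf_theta].
  rewrite Derive_const, Derive_id.
  rewrite (tau_vanishes t x u v HO), (xi_form t x u v HO), (eta_form t x u v HO),
    (theta_form t x u v HO), (m_coef_affine t x).
  repeat split; field.
Qed.

End Necessity.

Theorem lemma2 (gamma : R) (Hgamma : gamma <> 0) (Q : VF) :
  (forall V1 V2 : R -> R, smooth1 V1 -> smooth1 V2 -> in_max_Lie_alg gamma V1 V2 Q)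
  <->
  exists c1 c2 c3 : R,
    vf_eq_on_Omega Q (vf_comb c1 c2 c3 vfM (vfG (fun _ => 1)) (vfG (fun t => t))).
Proof.
  split.
  - exact (vf_eq_of_invariance gamma Q Hgamma).
  - intros [c1 [c2 [c3 HE]]] V1 V2 _ _. exact (invariance_of_vf_eq gamma Q c1 c2 c3 HE V1 V2).
Qed.
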